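(* Let $E$ be a Banach $f$-algebra and let $(x_\alpha)_{\alpha\in A}$, $(y_\beta)_{\beta\in B}$ be nets in $E$ with $x_\alpha\xrightarrow{mw}x$ and $y_\beta\xrightarrow{mw}y$. Then the nets $(x_\alpha\vee y_\beta)_{(\alpha,\beta)\in A\times B}$ and $(x_\alpha\wedge y_\beta)_{(\alpha,\beta)\in A\times B}$ $mw$-converge to $x\vee y$ and $x\wedge y$, respectively.
   Context: All vector lattices are real and Archimedean. An $f$-algebra is a vector lattice with an associative multiplication making it an algebra, such that products of positive elements are positive and $x\wedge y=0$ implies $(xz)\wedge y=(zx)\wedge y=0$ for all $z\ge0$. A Banach $f$-algebra is an $f$-algebra which is a Banach lattice with $\|xy\|\le\|x\|\|y\|$. A net $(x_\alpha)$ in $E$ $mw$-converges to $x$ ($x_\alpha\xrightarrow{mw}x$) if $|x_\alpha-x|u\to0$ weakly for every $u\in E_+$. $A\times B$ is directed componentwise. *)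

From HB Require Import structures.
From mathcomp Require Import all_boot all_order all_algebra.
From mathcomp Require Import all_classical all_reals topology normedtype.
Set Implicit Arguments. Unset Strict Implicit. Unset Printing Implicit Defensive.
Import Order.TTheory GRing.Theory Num.Theory.
Import numFieldNormedType.Exports.
Local Open Scope ring_scope.

Record banach_falgebra (R : realType) (E : completeNormedModType R) := BFA {
  le : E -> E -> Prop;
  join : E -> E -> E;
  meet : E -> E -> E;
  mul : E -> E -> E;
  le_refl : forall x, le x x;
  le_trans : forall x y z, le x y -> le y z -> le x z;
  le_anti : forall x y, le x y -> le y x -> x = y;
  le_add : forall x y z, le x y -> le (x + z) (y + z);
  le_scale : forall (a : R) x y, 0 <= a -> le x y -> le (a *: x) (a *: y);
  join_ub_l : forall x y, le x (join x y);
  join_ub_r : forall x y, le y (join x y);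
  join_least : forall x y z, le x z -> le y z -> le (join x y) z;
  meet_lb_l : forall x y, le (meet x y) x;
  meet_lb_r : forall x y, le (meet x y) y;
  meet_greatest : forall x y z, le z x -> le z y -> le z (meet x y);
  archimedean : forall x y, le 0 x -> (forall n : nat, le (n%:R *: x) y) -> x = 0;
  mulA : forall x y z, mul x (mul y z) = mul (mul x y) z;
  mulDl : forall x y z, mul (x + y) z = mul x z + mul y z;
  mulDr : forall x y z, mul x (y + z) = mul x y + mul x z;
  mulZl : forall (a : R) x y, mul (a *: x) y = a *: mul x y;
  mulZr : forall (a : R) x y, mul x (a *: y) = a *: mul x y;
  mul_ge0 : forall x y, le 0 x -> le 0 y -> le 0 (mul x y);
  f_prop : forall x y z, meet x y = 0 -> le 0 z ->
    meet (mul x z) y = 0 /\ meet (mul z x) y = 0;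
  lattice_norm : forall x y, le (join x (- x)) (join y (- y)) -> `|x| <= `|y|;
  norm_mul : forall x y, `|mul x y| <= `|x| * `|y|
}.

Definition labs (R : realType) (E : completeNormedModType R)
  (F : banach_falgebra E) (x : E) : E := join F x (- x).

Definition directed (A : Type) (leA : A -> A -> Prop) : Prop :=
  [/\ (exists a : A, True), (forall a, leA a a),
      (forall a b c, leA a b -> leA b c -> leA a c) &
      (forall a b, exists c, leA a c /\ leA b c)].

Definition prod_le (A B : Type) (leA : A -> A -> Prop) (leB : B -> B -> Prop)
  (p q : A * B) : Prop := leA p.1 q.1 /\ leB p.2 q.2.

Definition net_cvg (R : realType) (A : Type) (leA : A -> A -> Prop)
  (r : A -> R) (l : R) : Prop :=
  forall eps : R, 0 < eps -> exists a0 : A, forall a, leA a0 a -> `|r a - l| < eps.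

Definition cont_lin_functional (R : realType) (E : completeNormedModType R)
  (f : E -> R) : Prop :=
  (forall (a : R) (u v : E), f (a *: u + v) = a * f u + f v) /\ continuous f.

Definition weak_cvg (R : realType) (E : completeNormedModType R) (A : Type)
  (leA : A -> A -> Prop) (z : A -> E) (l : E) : Prop :=
  forall f : E -> R, cont_lin_functional f -> net_cvg leA (fun a => f (z a)) (f l).

Definition mw_cvg (R : realType) (E : completeNormedModType R)
  (F : banach_falgebra E) (A : Type) (leA : A -> A -> Prop) (xn : A -> E) (x : E) : Prop :=
  forall u : E, le F 0 u -> weak_cvg leA (fun a => mul F (labs F (xn a - x)) u) 0.

From Pilot Require Import Defs.
From HB Require Import structures.
From mathcomp Require Import all_boot all_order all_algebra.
From mathcomp Require Import all_classical all_reals topology normedtype.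
From mathcomp Require Import lra.
Set Implicit Arguments. Unset Strict Implicit. Unset Printing Implicit Defensive.
Import Order.TTheory GRing.Theory Num.Theory.
Import numFieldNormedType.Exports.
Local Open Scope ring_scope.

(* Birkhoff's inequality |a ∨ b - c ∨ d| <= |a - c| + |b - d|, multiplied by
   u >= 0, squeezes |x_α ∨ y_β - x ∨ y| u between 0 and
   |x_α - x| u + |y_β - y| u, and the latter net tends weakly to 0.  Weak
   convergence to 0 passes to such dominated positive nets because every
   continuous functional f is the difference of the positive continuous
   functionals f⁺ and f⁺ - f, where f⁺ is given on the positive cone by the
   Riesz-Kantorovich formula f⁺(x) = sup {f y | 0 <= y <= x}. *)

Section VectorLattice.
Variables (R : realType) (E : completeNormedModType R) (F : banach_falgebra E).
Local Notation lef := (le F).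
Local Notation jn := (Defs.join F).
Local Notation mt := (Defs.meet F).
Local Notation lab := (labs F).
Implicit Types a b c d u x y z : E.

Lemma lef_add2l x y z : lef x y -> lef (z + x) (z + y).
Proof. by move=> lexy; rewrite ![z + _]addrC; apply: le_add. Qed.

Lemma lefD x y z w : lef x y -> lef z w -> lef (x + z) (y + w).
Proof. by move=> lexy lezw; apply: Defs.le_trans (le_add z lexy) (lef_add2l y lezw). Qed.

Lemma lefBlDr x y z : lef (x - y) z <-> lef x (z + y).
Proof.
split=> [/(le_add y)|/(le_add (- y))]; first by rewrite subrK.
by rewrite addrK.
Qed.

Lemma lefBrDr x y z : lef x (z - y) <-> lef (x + y) z.
Proof.
split=> [/(le_add y)|/(le_add (- y))]; first by rewrite subrK.
by rewrite addrK.
Qed.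

Lemma subr_gef0 x y : lef 0 (y - x) <-> lef x y.
Proof. by rewrite lefBrDr add0r. Qed.

Lemma lefN2 x y : lef x y -> lef (- y) (- x).
Proof. by move=> /subr_gef0 lexy; apply/subr_gef0; rewrite opprK addrC. Qed.

Lemma lef_addl x y : lef 0 y -> lef x (y + x).
Proof. by move=> /(le_add x); rewrite add0r. Qed.

Lemma scale_gef0 (k : R) x : 0 <= k -> lef 0 x -> lef 0 (k *: x).
Proof. by move=> k_ge0 /(le_scale k_ge0); rewrite scaler0. Qed.

Lemma joinC x y : jn x y = jn y x.
Proof.
by apply: Defs.le_anti; apply: join_least; (apply: join_ub_l || apply: join_ub_r).
Qed.

Lemma joinDr x y z : jn (x + z) (y + z) = jn x y + z.
Proof.
apply: Defs.le_anti.
  by apply: join_least; apply: le_add; [apply: join_ub_l | apply: join_ub_r].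
by apply/lefBrDr/join_least; apply/lefBrDr; [apply: join_ub_l | apply: join_ub_r].
Qed.

Lemma meetE x y : mt x y = - jn (- x) (- y).
Proof.
apply: Defs.le_anti.
  by rewrite -[mt x y]opprK; apply/lefN2/join_least; apply: lefN2;
    [apply: meet_lb_l | apply: meet_lb_r].
by apply: meet_greatest; rewrite -[X in lef _ X]opprK; apply: lefN2;
  [apply: join_ub_l | apply: join_ub_r].
Qed.

Definition ppart x := jn x 0.
Definition npart x := ppart (- x).

Lemma ppart_ge0 x : lef 0 (ppart x).
Proof. exact: join_ub_r. Qed.

Lemma ppartBnpart x : ppart x - npart x = x.
Proof.
have -> : npart x = jn 0 x - x by rewrite -joinDr add0r subrr.
by rewrite joinC opprB addrC subrK.
Qed.

Lemma lef_labs x : lef x (lab x).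
Proof. exact: join_ub_l. Qed.

Lemma labsN x : lab (- x) = lab x.
Proof. by rewrite /labs opprK joinC. Qed.

Lemma labs_ge0 x : lef 0 (lab x).
Proof.
have : lef (x + - x) (lab x + lab x) by apply: lefD; [apply: lef_labs | apply: join_ub_r].
rewrite subrr -mulr2n -scaler_nat => /(le_scale (a := 2^-1) (ltW _)).
by rewrite scaler0 scalerA mulVf ?pnatr_eq0 // scale1r; apply; rewrite invr_gt0 ltr0n.
Qed.

Lemma ger0_labs x : lef 0 x -> lab x = x.
Proof.
move=> x_ge0; apply: Defs.le_anti; last exact: lef_labs.
apply: join_least; first exact: Defs.le_refl.
by apply: (Defs.le_trans _ x_ge0); rewrite -oppr0; apply: lefN2.
Qed.

Lemma ppart_le_labs x : lef (ppart x) (lab x).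
Proof. by apply: join_least; [apply: lef_labs | apply: labs_ge0]. Qed.

Lemma norm_lef x y : lef 0 x -> lef x y -> `|x| <= `|y|.
Proof.
move=> x_ge0 lexy; apply: (@lattice_norm _ _ F).
by rewrite -/(lab x) -/(lab y) !ger0_labs //; apply: Defs.le_trans lexy.
Qed.

Lemma norm_ppart x : `|ppart x| <= `|x|.
Proof.
apply: (@lattice_norm _ _ F).
rewrite -/(lab (ppart x)) -/(lab x) ger0_labs; [exact: ppart_le_labs | exact: ppart_ge0].
Qed.

Lemma norm_npart x : `|npart x| <= `|x|.
Proof. by rewrite -[`|x|]normrN; apply: norm_ppart. Qed.

Lemma riesz_decomposition y a b : lef 0 a -> lef 0 b -> lef 0 y -> lef y (a + b) ->
  exists y1 y2, [/\ lef 0 y1 /\ lef y1 a, lef 0 y2 /\ lef y2 b & y = y1 + y2].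
Proof.
move=> a_ge0 b_ge0 y_ge0 ley; exists (mt y a), (y - mt y a); split.
- by split; [apply: meet_greatest | apply: meet_lb_r].
- split; first by apply/subr_gef0/meet_lb_l.
  rewrite meetE opprK addrC -joinDr addNr; apply: join_least => //.
  by rewrite addrC; apply/lefBlDr; rewrite addrC.
- by rewrite addrC subrK.
Qed.

Lemma lef_labsB a c : lef a (lab (a - c) + c).
Proof. by apply/lefBlDr/lef_labs. Qed.

Lemma birkhoff_join a b c d : lef (lab (jn a b - jn c d)) (lab (a - c) + lab (b - d)).
Proof.
have key a' b' c' d' : lef (jn a' b' - jn c' d') (lab (a' - c') + lab (b' - d')).
  have le_join_add s z w : lef 0 s -> lef z (s + jn z w) /\ lef w (s + jn z w).
    by move=> s_ge0; split; apply: (Defs.le_trans _ (lef_addl _ s_ge0));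
      [apply: join_ub_l | apply: join_ub_r].
  apply/lefBlDr/join_least.
  - apply: Defs.le_trans (lef_labsB a' c') _; rewrite -addrA; apply: lef_add2l.
    exact: (le_join_add _ _ _ (labs_ge0 _)).1.
  - apply: Defs.le_trans (lef_labsB b' d') _.
    rewrite [lab (a' - c') + _]addrC -addrA; apply: lef_add2l.
    exact: (le_join_add _ _ _ (labs_ge0 _)).2.
apply: join_least; first exact: key.
by rewrite opprB -(labsN (a - c)) -(labsN (b - d)) !opprB; apply: key.
Qed.

Lemma birkhoff_meet a b c d : lef (lab (mt a b - mt c d)) (lab (a - c) + lab (b - d)).
Proof.
rewrite !meetE -opprD labsN; apply: Defs.le_trans (birkhoff_join _ _ _ _) _.
by rewrite -!opprD !labsN; apply: Defs.le_refl.
Qed.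

Local Notation mul := (Defs.mul F).

Lemma mulNl a u : mul (- a) u = - mul a u.
Proof. by rewrite -scaleN1r mulZl scaleN1r. Qed.

Lemma mul_lef2r u a b : lef 0 u -> lef a b -> lef (mul a u) (mul b u).
Proof.
by move=> u_ge0 /subr_gef0 leab; apply/subr_gef0; rewrite -mulNl -mulDl; apply: mul_ge0.
Qed.

Lemma mul_labs_bounds a b u : lef 0 u -> lef (lab a) b ->
  lef 0 (mul (lab a) u) /\ lef (mul (lab a) u) (mul b u).
Proof.
by move=> u_ge0 leab; split; [apply: mul_ge0 => //; apply: labs_ge0 | apply: mul_lef2r].
Qed.

End VectorLattice.

Section ContinuousLinearFunctional.
Variables (R : realType) (E : completeNormedModType R).

Definition lin_of (g : E -> R) (g_lin : linear g) : {linear E -> R} :=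
  HB.pack g (GRing.isLinear.Build _ _ _ _ g g_lin).

Lemma bounded_linear_functional_continuous (g : E -> R) M : linear g ->
  (forall x, `|g x| <= M * `|x|) -> continuous g.
Proof.
move=> g_lin g_bound.
apply: (@bounded_linear_continuous _ _ _ (lin_of g_lin)); apply/linear_boundedP.
near=> r => x; apply: le_trans (g_bound x) _; apply: ler_wpM2r => //.
by near: r; apply: nbhs_pinfty_ge; apply: num_real.
Unshelve. all: by end_near. Qed.

Lemma cont_lin_functional_bounded (g : E -> R) : cont_lin_functional g ->
  exists2 M, 0 < M & forall x, `|g x| <= M * `|x|.
Proof.
move=> [g_lin g_cont].
have := @continuous_linear_bounded _ _ _ 0 (lin_of g_lin) (g_cont 0).
by move=> /linear_boundedP/pinfty_ex_gt0.
Qed.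

Lemma linear_cont_lin_functional (g : {linear E -> R}) :
  continuous g -> cont_lin_functional g.
Proof. by split=> //; apply: linearP. Qed.

End ContinuousLinearFunctional.

Definition positive_functional (R : realType) (E : completeNormedModType R)
  (F : banach_falgebra E) (g : E -> R) : Prop :=
  forall x, le F 0 x -> 0 <= g x.

Section RieszKantorovich.
Variables (R : realType) (E : completeNormedModType R) (F : banach_falgebra E).
Variables (f : {linear E -> R}) (M : R).
Hypotheses (M_ge0 : 0 <= M) (f_bound : forall x, `|f x| <= M * `|x|).
Local Notation lef := (le F).
Implicit Types a b x y : E.

Lemma le_f_bound x y : lef 0 y -> lef y x -> f y <= M * `|x|.
Proof.
move=> y_ge0 leyx; apply: le_trans (ler_norm _) (le_trans (f_bound y) _).
by apply: ler_wpM2l => //; apply: (norm_lef y_ge0).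
Qed.

Definition fsup x := sup [set f y | y in [set y | lef 0 y /\ lef y x]].

Lemma fsup_ub x y : lef 0 y -> lef y x -> f y <= fsup x.
Proof.
move=> y_ge0 leyx; apply: sup_upper_bound; last by exists y.
split; first by exists (f y), y.
by exists (M * `|x|) => _ [z [z_ge0 lezx] <-]; apply: le_f_bound.
Qed.

Lemma fsup_le x r : lef 0 x -> (forall y, lef 0 y -> lef y x -> f y <= r) -> fsup x <= r.
Proof.
move=> x_ge0 ler; apply: ge_sup; first by exists (f x), x; split => //; apply: Defs.le_refl.
by move=> _ [y [y_ge0 leyx] <-]; apply: ler.
Qed.

Lemma fsup_ge0 x : lef 0 x -> 0 <= fsup x.
Proof. by move=> x_ge0; rewrite -(linear0 f); apply: fsup_ub => //; apply: Defs.le_refl. Qed.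

Lemma fsup_bound x : lef 0 x -> fsup x <= M * `|x|.
Proof.
by move=> x_ge0; apply: fsup_le => // y; apply: le_f_bound.
Qed.

Lemma fsupD a b : lef 0 a -> lef 0 b -> fsup (a + b) = fsup a + fsup b.
Proof.
move=> a_ge0 b_ge0; have ab_ge0 : lef 0 (a + b) by rewrite -[0]addr0; apply: lefD.
apply/eqP; rewrite eq_le; apply/andP; split.
  apply: fsup_le => // y y_ge0 leyab.
  have [y1 [y2 [[y1_ge0 ley1] [y2_ge0 ley2] ->]]] := riesz_decomposition a_ge0 b_ge0 y_ge0 leyab.
  by rewrite linearD; apply: lerD; apply: fsup_ub.
rewrite -lerBrDr; apply: fsup_le => // y1 y1_ge0 ley1.
rewrite lerBrDl -lerBrDr; apply: fsup_le => // y2 y2_ge0 ley2.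
by rewrite lerBrDl -linearD; apply: fsup_ub; [rewrite -[0]addr0 | ]; apply: lefD.
Qed.

Lemma fsup0 : fsup 0 = 0.
Proof.
have lef00 : lef 0 0 by apply: Defs.le_refl.
by have := fsupD lef00 lef00; rewrite addr0; lra.
Qed.

Lemma fsupZ_le (k : R) x : 0 < k -> lef 0 x -> fsup (k *: x) <= k * fsup x.
Proof.
move=> k_gt0 x_ge0; apply: fsup_le => [|y y_ge0 leykx]; first exact: scale_gef0 (ltW k_gt0) x_ge0.
have ki_ge0 : 0 <= k^-1 by rewrite invr_ge0 ltW.
rewrite -[y](scalerKV (lt0r_neq0 k_gt0)) linearZ /= ler_pM2l //.
apply: fsup_ub; first exact: scale_gef0.
by rewrite -[x](scalerK (lt0r_neq0 k_gt0)); apply: le_scale.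
Qed.

Lemma fsupZ (k : R) x : 0 <= k -> lef 0 x -> fsup (k *: x) = k * fsup x.
Proof.
rewrite le_eqVlt => /predU1P[<- _|k_gt0 x_ge0]; first by rewrite scale0r fsup0 mul0r.
apply/eqP; rewrite eq_le fsupZ_le //= -ler_pdivlMl //.
rewrite -{1}[x](scalerK (lt0r_neq0 k_gt0)); apply: fsupZ_le; first by rewrite invr_gt0.
exact: scale_gef0 (ltW k_gt0) x_ge0.
Qed.

Definition fpos x := fsup (ppart F x) - fsup (npart F x).

Lemma fposB a b : lef 0 a -> lef 0 b -> fpos (a - b) = fsup a - fsup b.
Proof.
move=> a_ge0 b_ge0; rewrite /fpos; set d := a - b.
have : ppart F d + b = a + npart F d.
  by rewrite -(subrK (npart F d) (ppart F d)) ppartBnpart addrAC subrK.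
by move=> /(congr1 fsup); rewrite !fsupD //; [lra | apply: ppart_ge0 ..].
Qed.

Lemma fposE x : lef 0 x -> fpos x = fsup x.
Proof. by move=> x_ge0; rewrite -[x]subr0 fposB ?fsup0 ?subr0 //; apply: Defs.le_refl. Qed.

Lemma fposD x y : fpos (x + y) = fpos x + fpos y.
Proof.
have -> : x + y = (ppart F x + ppart F y) - (npart F x + npart F y).
  by rewrite opprD addrACA !ppartBnpart.
have p_ge0 z : lef 0 (ppart F z) := ppart_ge0 F z.
have n_ge0 z : lef 0 (npart F z) := ppart_ge0 F (- z).
rewrite fposB ?fsupD //; first by rewrite /fpos; lra.
all: by rewrite -[0]addr0; apply: lefD.
Qed.

Lemma fposN x : fpos (- x) = - fpos x.
Proof. by rewrite /fpos /npart opprK opprB. Qed.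

Lemma fposZ (k : R) x : 0 <= k -> fpos (k *: x) = k * fpos x.
Proof.
move=> k_ge0; have p_ge0 := ppart_ge0 F x; have n_ge0 := ppart_ge0 F (- x).
by rewrite -{1}(ppartBnpart F x) scalerBr fposB ?fsupZ ?mulrBr //; apply: scale_gef0.
Qed.

Lemma fpos_linear : linear fpos.
Proof.
move=> k u v; rewrite fposD; congr (_ + _).
have [k_ge0|k_lt0] := leP 0 k; first exact: fposZ.
have k_ge0 : 0 <= - k by rewrite oppr_ge0 ltW.
by rewrite -[k]opprK scaleNr fposN fposZ // mulNr !opprK.
Qed.

Lemma fpos_bound x : `|fpos x| <= M * `|x|.
Proof.
have bounds z : lef 0 z -> `|z| <= `|x| -> 0 <= fsup z <= M * `|x|.
  move=> z_ge0 lezx; rewrite fsup_ge0 //=.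
  by apply: le_trans (fsup_bound z_ge0) _; apply: ler_wpM2l.
have /andP[p_ge0 p_le] := bounds _ (ppart_ge0 F x) (norm_ppart F x).
have /andP[n_ge0 n_le] := bounds _ (ppart_ge0 F (- x)) (norm_npart F x).
by rewrite /fpos ler_norml; apply/andP; split; lra.
Qed.

Lemma fpos_ge0 x : lef 0 x -> 0 <= fpos x.
Proof. by move=> x_ge0; rewrite fposE // fsup_ge0. Qed.

Lemma le_fpos x : lef 0 x -> f x <= fpos x.
Proof. by move=> x_ge0; rewrite fposE //; apply: fsup_ub => //; apply: Defs.le_refl. Qed.

End RieszKantorovich.

Lemma cont_lin_functional_positive_decomposition (R : realType)
    (E : completeNormedModType R) (F : banach_falgebra E) (f : E -> R) :
  cont_lin_functional f -> exists g h : {linear E -> R},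
    [/\ continuous g, continuous h, positive_functional F g,
      positive_functional F h & forall x, f x = g x - h x].
Proof.
move=> f_cont; have [M M_gt0 f_bound] := cont_lin_functional_bounded f_cont.
pose fl := lin_of f_cont.1; have fl_bound : forall x, `|fl x| <= M * `|x| := f_bound.
have fpos_linear := fpos_linear F (ltW M_gt0) fl_bound.
have fpos_bound := fpos_bound F (ltW M_gt0) fl_bound.
pose g := lin_of fpos_linear.
exists g, (g \- fl); split.
- exact: bounded_linear_functional_continuous fpos_linear fpos_bound.
- apply: (bounded_linear_functional_continuous (M := M + M) (linearP (g \- fl))) => x /=.
  rewrite mulrDl; apply: le_trans (ler_normB _ _) (lerD (fpos_bound x) (f_bound x)).
- exact: fpos_ge0 (ltW M_gt0) fl_bound.
- by move=> x x_ge0; rewrite /= subr_ge0; apply: (le_fpos (ltW M_gt0) fl_bound).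
- by move=> x; rewrite /= opprB addrC subrK.
Qed.

Section Nets.
Variables (C : Type) (leC : C -> C -> Prop).

Lemma net_cvg0_le (R : realType) (r s : C -> R) :
  (forall c, `|r c| <= s c) -> net_cvg leC s 0 -> net_cvg leC r 0.
Proof.
move=> le_rs s0 eps eps_gt0; have [c0 near_s] := s0 eps eps_gt0.
exists c0 => c lec0c; rewrite subr0; apply: le_lt_trans (le_rs c) _.
by apply: le_lt_trans (ler_norm _) _; rewrite -[s c]subr0; apply: near_s.
Qed.

Hypothesis leC_directed : directed leC.

Lemma net_cvg0D (R : realType) (r s : C -> R) :
  net_cvg leC r 0 -> net_cvg leC s 0 -> net_cvg leC (fun c => r c + s c) 0.
Proof.
have [_ _ leC_trans leC_ub] := leC_directed.
move=> r0 s0 eps eps_gt0; have eps2_gt0 : 0 < eps / 2 by rewrite divr_gt0.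
have [c1 near_r] := r0 _ eps2_gt0; have [c2 near_s] := s0 _ eps2_gt0.
have [c0 [lec1 lec2]] := leC_ub c1 c2; exists c0 => c lec0c.
have := near_r c (leC_trans _ _ _ lec1 lec0c); have := near_s c (leC_trans _ _ _ lec2 lec0c).
rewrite !subr0 => /ltr_normlP[? ?] /ltr_normlP[? ?]; apply/ltr_normlP; split; lra.
Qed.

End Nets.

Lemma prod_directed (A B : Type) (leA : A -> A -> Prop) (leB : B -> B -> Prop) :
  directed leA -> directed leB -> directed (prod_le leA leB).
Proof.
move=> [[a0 _] leA_refl leA_trans leA_ub] [[b0 _] leB_refl leB_trans leB_ub]; split.
- by exists (a0, b0).
- by move=> p; split; [apply: leA_refl | apply: leB_refl].
- by move=> p q r [? ?] [? ?]; split; [apply: leA_trans | apply: leB_trans]; eassumption.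
- move=> p q; have [a [? ?]] := leA_ub p.1 q.1; have [b [? ?]] := leB_ub p.2 q.2.
  by exists (a, b).
Qed.

Section WeakConvergence.
Variables (R : realType) (E : completeNormedModType R).

Lemma weak_cvg0_fst (A B : Type) (leA : A -> A -> Prop) (leB : B -> B -> Prop)
    (v : A -> E) :
  directed leB -> weak_cvg leA v 0 -> weak_cvg (prod_le leA leB) (fun p => v p.1) 0.
Proof.
move=> [[b0 _] _ _ _] v0 f f_cont eps eps_gt0; have [a0 near_v] := v0 f f_cont eps eps_gt0.
by exists (a0, b0) => p [lea0 _]; apply: near_v.
Qed.

Lemma weak_cvg0_snd (A B : Type) (leA : A -> A -> Prop) (leB : B -> B -> Prop)
    (v : B -> E) :
  directed leA -> weak_cvg leB v 0 -> weak_cvg (prod_le leA leB) (fun p => v p.2) 0.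
Proof.
move=> [[a0 _] _ _ _] v0 f f_cont eps eps_gt0; have [b0 near_v] := v0 f f_cont eps eps_gt0.
by exists (a0, b0) => p [_ leb0]; apply: near_v.
Qed.

Variables (C : Type) (leC : C -> C -> Prop).
Hypothesis leC_directed : directed leC.

Lemma weak_cvg0D (v w : C -> E) :
  weak_cvg leC v 0 -> weak_cvg leC w 0 -> weak_cvg leC (fun c => v c + w c) 0.
Proof.
move=> v0 w0 f f_cont; pose fl := lin_of f_cont.1.
have f0 : f 0 = 0 := linear0 fl.
have -> : (fun c => f (v c + w c)) = (fun c => f (v c) + f (w c)).
  by apply: funext => c; apply: (linearD fl).
by rewrite f0; apply: net_cvg0D => //; rewrite -f0; [apply: v0 | apply: w0].
Qed.

Lemma weak_cvg0_le (F : banach_falgebra E) (z w : C -> E) :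
  (forall c, le F 0 (z c) /\ le F (z c) (w c)) ->
  weak_cvg leC w 0 -> weak_cvg leC z 0.
Proof.
move=> zw w0 f f_cont.
have [g [h [g_cont h_cont g_ge0 h_ge0 fE]]] :=
  cont_lin_functional_positive_decomposition F f_cont.
have sandwich (k : {linear E -> R}) c :
    positive_functional F k -> 0 <= k (z c) <= k (w c).
  move=> k_ge0; have [z_ge0 lezw] := zw c.
  by rewrite k_ge0 //= -subr_ge0 -linearB; apply/k_ge0/subr_gef0.
have kw0 (k : {linear E -> R}) : continuous k -> net_cvg leC (fun c => k (w c)) 0.
  by move=> k_cont; rewrite -(linear0 k); apply/w0/linear_cont_lin_functional.
rewrite fE (linear0 g) (linear0 h) subr0.
apply: (net_cvg0_le (s := fun c => g (w c) + h (w c))).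
  move=> c; rewrite fE.
  have /andP[? ?] := sandwich g c g_ge0; have /andP[? ?] := sandwich h c h_ge0.
  by rewrite ler_norml; apply/andP; split; lra.
exact: net_cvg0D (kw0 g g_cont) (kw0 h h_cont).
Qed.

End WeakConvergence.

Theorem proposition2p6 (R : realType) (E : completeNormedModType R)
  (F : banach_falgebra E)
  (A : Type) (leA : A -> A -> Prop) (B : Type) (leB : B -> B -> Prop)
  (hA : directed leA) (hB : directed leB)
  (xn : A -> E) (yn : B -> E) (x y : E) :
  mw_cvg F leA xn x -> mw_cvg F leB yn y ->
  mw_cvg F (prod_le leA leB) (fun p => join F (xn p.1) (yn p.2)) (join F x y) /\
  mw_cvg F (prod_le leA leB) (fun p => meet F (xn p.1) (yn p.2)) (meet F x y).
Proof.
move=> xn_cvg yn_cvg; have AB_directed := prod_directed hA hB.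
have dominating_cvg u : le F 0 u -> weak_cvg (prod_le leA leB)
    (fun p => Defs.mul F (labs F (xn p.1 - x)) u + Defs.mul F (labs F (yn p.2 - y)) u) 0.
  move=> u_ge0; apply: (weak_cvg0D AB_directed).
    exact: weak_cvg0_fst hB (xn_cvg u u_ge0).
  exact: weak_cvg0_snd hA (yn_cvg u u_ge0).
split=> u u_ge0; apply: (weak_cvg0_le AB_directed _ (dominating_cvg u u_ge0)) => p;
  rewrite -mulDl; apply: mul_labs_bounds => //.
- exact: birkhoff_join.
- exact: birkhoff_meet.
Qed.
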